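(* Let $A$ and $B$ be inertial bodies with reference frames $O_A$ and $O_B$ whose origins coincide, and let $L_{BA}:O_B\to O_A$ be the linear map sending the coordinates $(x,\tau)^T$ of an event in $O_B$ to the coordinates of the same event in $O_A$. Then the vectors $(1,1)^T$ and $(-1,1)^T$ are eigenvectors of $L_{BA}$.
   Context: Model: elementary bodies move on a one-dimensional discrete environment; at each integer time step an elementary body either moves one unit of space in its current direction (an ''elementary motion'', a straight world-line segment) or turns (reverses direction without moving). Hence in the absolute reference frame (space coordinate $x$, time $t$, events written as column vectors $(x,t)^T$), world lines of elementary motions going out from the origin have the direction of $(1,1)^T$ (rightward motion) or of $(-1,1)^T$ (leftward motion); the direction of a vector $\bar a$ is the set $\{\lambda\bar a\mid\lambda>0\}$. A body is a finite set of elementary bodies; a body is inertial if its absolute spatial velocity and proper time velocity are constant. Each inertial body $B$ carries a reference frame $O_B$ (coordinates: space coordinate and proper time $\tau_B$ of $B$), and the only restriction imposed on inertial reference frames is that the space-time coordinates of the same event in two inertial frames are related by an affine transformation; when origins coincide this transformation is linear. In the model the two directions of elementary motions are physical (frame-independent) directions: in every inertial reference frame the rightward and leftward elementary motions from the origin have directions $(1,1)^T$ and $(-1,1)^T$ respectively. *)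

From mathcomp Require Import all_boot all_order all_algebra.
Set Implicit Arguments. Unset Strict Implicit. Unset Printing Implicit Defensive.
Import Order.TTheory GRing.Theory Num.Theory.
Local Open Scope ring_scope.

(* Events in an inertial frame: column vectors (x, t)^T, entry 0 = space,
   entry 1 = time. *)
Definition ev {R : ringType} (x t : R) : 'cV[R]_2 :=
  \col_(i < 2) (if i == ord0 then x else t).

Definition direction {R : numDomainType} (a : 'cV[R]_2) : 'cV[R]_2 -> Prop :=
  fun v => exists2 lam : R, 0 < lam & v = lam *: a.

Definition eigenvector {R : ringType} (L : 'M[R]_2) (v : 'cV[R]_2) : Prop :=
  v != 0 /\ exists mu : R, L *m v = mu *: v.

From mathcomp Require Import all_boot all_order all_algebra.
Import Order.TTheory GRing.Theory Num.Theory.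
Local Open Scope ring_scope.

(* Each of (1,1)^T and (-1,1)^T lies in its own direction, so invariance of
   that direction under L_BA gives L_BA a = lam a for some lam > 0. *)

Lemma direction_refl {R : numDomainType} (a : 'cV[R]_2) : direction a a.
Proof. by exists 1; rewrite ?ltr01 ?scale1r. Qed.

Lemma ev_neq0 {R : nzRingType} (x : R) : ev x 1 != 0.
Proof.
apply/eqP => /matrixP /(_ 1 0); rewrite !mxE /=.
by move/eqP; rewrite oner_eq0.
Qed.

Lemma eigenvector_of_direction_invariant (R : numDomainType) (L : 'M[R]_2)
    (a : 'cV[R]_2) :
  a != 0 -> (forall v, direction a v -> direction a (L *m v)) ->
  eigenvector L a.
Proof.
move=> a_neq0 La; split=> //.
by have [lam _ ->] := La a (direction_refl a); exists lam.
Qed.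

Theorem lemma1 (R : realFieldType) (L_BA : 'M[R]_2)
  (hinv : L_BA \in unitmx)
  (hright : forall v, direction (ev 1 1) v -> direction (ev 1 1) (L_BA *m v))
  (hleft : forall v, direction (ev (-1) 1) v -> direction (ev (-1) 1) (L_BA *m v)) :
  eigenvector L_BA (ev 1 1) /\ eigenvector L_BA (ev (-1) 1).
Proof.
by split; apply: eigenvector_of_direction_invariant; rewrite ?ev_neq0.
Qed.
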